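(* Let $G$ be a non-compact, compactly generated, totally disconnected, locally compact group, and let $H\le\mathbb{Q}^{+}$ be the image of its modular function. Let $$A=\Big\{\sum_{i=1}^k (p_i+q_i)\ \Big|\ k\ge 1,\ p_1,\dots,p_k,q_1,\dots,q_k \text{ positive integers},\ \Big\langle \tfrac{p_1}{q_1},\dots,\tfrac{p_k}{q_k}\Big\rangle = H\Big\}.$$ Then every Cayley–Abels graph of $G$ has degree at least $\min(A)$. In particular, if $H$ is cyclic, generated by $p/q$ with $p,q$ coprime positive integers, then every Cayley–Abels graph of $G$ has degree at least $p+q$, i.e. $\mathrm{md}(G)\ge p+q$.
   Context: A Cayley–Abels graph for a totally disconnected, locally compact group $G$ is a connected, locally finite simple graph with an action of $G$ by automorphisms that is vertex-transitive with compact open vertex stabilizers; $\mathrm{md}(G)$ is the minimal degree of such a graph. The modular function $\Delta\colon G\to\mathbb{R}^+$ is defined via a right-invariant Haar measure $\mu$ by $\mu(gA)=\Delta(g)\mu(A)$; its image is a subgroup of the multiplicative group $\mathbb{Q}^+$ of positive rationals. *)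

From HB Require Import structures.
From Stdlib Require Import Relations.Relation_Operators.
From mathcomp Require Import all_boot all_order all_algebra.
From mathcomp Require Import all_classical all_reals all_analysis.
Set Implicit Arguments. Unset Strict Implicit. Unset Printing Implicit Defensive.
Import Order.TTheory GRing.Theory Num.Theory.
Local Open Scope classical_set_scope.
Local Open Scope ring_scope.

Definition borel (T : ptopologicalType) : measurableType _ := g_sigma_algebraType (@open T).

Section TDLC.
Variables (T : ptopologicalType) (mul : T -> T -> T) (inv : T -> T) (one : T).

Definition is_group :=
  [/\ forall x y z, mul x (mul y z) = mul (mul x y) z,
      forall x, mul one x = x, forall x, mul x one = x,
      forall x, mul (inv x) x = one & forall x, mul x (inv x) = one].

Definition is_tdlc_group :=
  [/\ is_group,
      continuous (fun p : T * T => mul p.1 p.2),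
      continuous inv,
      hausdorff_space T &
      locally_compact [set: T] /\ totally_disconnected [set: T]].

Definition compactly_generated :=
  exists K : set T, compact K /\
    forall S : set T, K `<=` S -> S one ->
      (forall x y, S x -> S y -> S (mul x y)) ->
      (forall x, S x -> S (inv x)) -> S = [set: T].
End TDLC.

Definition right_haar (T : ptopologicalType) (mul : T -> T -> T) (R : realType)
    (mu : {measure set (borel T) -> \bar R}) :=
  [/\ (forall A : set (borel T), measurable A -> forall g : T,
         mu [set mul a g | a in A] = mu A),
      (forall K : set T, compact K -> (mu K < +oo)%E),
      (forall U : set T, open U -> U !=set0 -> (0 < mu U)%E),
      (forall A : set (borel T), measurable A ->
         mu A = ereal_inf [set mu U | U in [set U : set T | open U /\ A `<=` U]]) &
      (forall U : set T, open U ->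
         mu U = ereal_sup [set mu K | K in [set K : set T | compact K /\ K `<=` U]])].

Definition modular_function_of (T : ptopologicalType) (mul : T -> T -> T) (R : realType)
    (mu : {measure set (borel T) -> \bar R}) (Delta : T -> R) :=
  forall (g : T) (A : set (borel T)), measurable A ->
    mu [set mul g a | a in A] = ((Delta g)%:E * mu A)%E.

Definition gen_mulgroup (R : realType) (r : seq R) : set R :=
  [set x | exists e : seq int, size e = size r /\
     x = \prod_(i < size r) (r`_i) ^ (e`_i)].

Definition cayley_abels_graph (T : ptopologicalType) (mul : T -> T -> T) (one : T)
    (V : Type) (adj : V -> V -> Prop) (act : T -> V -> V) :=
  [/\ (forall v w, adj v w -> adj w v) /\ (forall v, ~ adj v v),
      (forall v w, clos_refl_trans V adj v w),
      (forall v, finite_set [set w | adj v w]),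
      ((forall v, act one v = v) /\ (forall g h v, act (mul g h) v = act g (act h v))) /\
      (forall g v w, adj v w <-> adj (act g v) (act g w)) &
      (forall v w, exists g, act g v = w) /\
      (forall v, open [set g | act g v = v] /\ compact [set g | act g v = v])].

Definition sums_set (R : realType) (H : set R) : set nat :=
  [set a | exists ps : seq (nat * nat),
     [/\ (0 < size ps)%N, all (fun pq => (0 < pq.1)%N && (0 < pq.2)%N) ps,
        gen_mulgroup [seq (pq.1)%:R / (pq.2)%:R | pq <- ps] = H &
        a = \sum_(pq <- ps) (pq.1 + pq.2)%N]].

From Stdlib Require Import Relations.Relation_Operators Relations.Operators_Properties.
From mathcomp Require Import all_boot all_order all_algebra.
From mathcomp Require Import all_classical all_reals all_analysis.
Set Implicit Arguments. Unset Strict Implicit. Unset Printing Implicit Defensive.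
Import Order.TTheory GRing.Theory Num.Theory.
Local Open Scope classical_set_scope.
Local Open Scope ring_scope.

(* Fix a Cayley-Abels graph, a vertex v with neighbours e_0, ..., e_(d-1),
   elements g_j sending v to e_j, and let K be the (compact open) stabiliser
   of v.  Measuring K and its intersections with other stabilisers against the
   Haar measure shows that Delta is a homomorphism trivial on stabilisers, and
   that for every neighbour index j
        Delta(g_j) * |K.e_j| = |K.(g_j^-1 v)|,
   i.e. Delta(g_j) is a ratio of sizes of K-orbits of neighbours.  The
   involution j |-> (index of g_j^-1 v) pairs up these orbits; choosing one
   representative per pair of distinct orbits yields disjoint orbit pairs, so
   the sum of their sizes is at most d, and their ratios generate the image of
   Delta because the graph is connected.  This gives an element of A below d
   (if all orbits are self-paired, Delta is trivial and 1/1 works, using d >= 2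
   which follows from non-compactness).  The cyclic case reduces to the number
   theoretic fact that a/b = (p/q)^z with z <> 0 and p, q coprime forces
   p + q <= a + b. *)

Section GeneratedGroup.
Variable R : realType.
Implicit Types (r : seq R) (x y : R).

Lemma gen_mulgroup1 r : gen_mulgroup r 1.
Proof.
exists (nseq (size r) 0); split; first by rewrite size_nseq.
by rewrite big1 // => i _; rewrite nth_nseq if_same expr0z.
Qed.

Lemma gen_mulgroupM r x y : (forall i, (i < size r)%N -> r`_i != 0) ->
  gen_mulgroup r x -> gen_mulgroup r y -> gen_mulgroup r (x * y).
Proof.
move=> nz [e1 [s1 ->]] [e2 [s2 ->]].
exists (mkseq (fun i => e1`_i + e2`_i) (size r)); split; first by rewrite size_mkseq.
rewrite -big_split /=; apply: eq_bigr => i _; rewrite nth_mkseq // exprzDr //.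
by rewrite unitfE nz.
Qed.

Lemma gen_mulgroupV r x : gen_mulgroup r x -> gen_mulgroup r x^-1.
Proof.
move=> [e1 [s1 ->]]; exists [seq - z | z <- e1]; split; first by rewrite size_map.
rewrite -prodfV; apply: eq_bigr => i _.
by rewrite (nth_map 0) ?invr_expz // s1.
Qed.

Lemma gen_mulgroup_nth r i : (i < size r)%N -> gen_mulgroup r r`_i.
Proof.
move=> hi; exists (mkseq (fun j => ((j == i) : nat)%:Z) (size r)); split.
  by rewrite size_mkseq.
rewrite (bigD1 (Ordinal hi)) //= big1 ?mulr1; first by rewrite nth_mkseq // eqxx expr1z.
move=> j hj; rewrite nth_mkseq // (_ : (j == i :> nat) = false) ?expr0z //.
by apply/negbTE; apply: contra hj => /eqP h; apply/eqP; apply: val_inj.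
Qed.

Lemma gen_mulgroup_mem r x : x \in r -> gen_mulgroup r x.
Proof. by move=> xr; rewrite -(nth_index 0 xr); apply: gen_mulgroup_nth; rewrite index_mem. Qed.

Lemma gen_mulgroup_min r (G : set R) : G 1 -> (forall x y, G x -> G y -> G (x * y)) ->
  (forall x, G x -> G x^-1) -> (forall i, (i < size r)%N -> G r`_i) ->
  gen_mulgroup r `<=` G.
Proof.
move=> G1 GM GV Gr x [e0 [se ->]].
apply: (big_ind G) => // i _.
have Gpow (n : nat) : G (r`_i ^+ n).
  by elim: n => [|n IH]; rewrite ?expr0 // exprS; apply: GM => //; apply: Gr.
by case: (e0`_i) => n; [exact: Gpow | apply: GV; exact: Gpow].
Qed.

Lemma gen_mulgroup_neq1 r x : gen_mulgroup r x -> x != 1 -> has (fun y => y != 1) r.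
Proof.
move=> rx; apply: contraTT => /hasPn r1.
suff /(_ x rx) -> : gen_mulgroup r `<=` [set 1] by rewrite eqxx.
apply: gen_mulgroup_min => //; first by move=> ? ? -> ->; rewrite mulr1.
  by move=> ? ->; rewrite invr1.
by move=> i /(mem_nth 0) /r1; rewrite negbK => /eqP.
Qed.

Lemma gen_mulgroup_cyclic x y : gen_mulgroup [:: x] y -> exists z : int, y = x ^ z.
Proof. by move=> [e0 [se ->]]; exists e0`_0; rewrite big_ord1. Qed.
End GeneratedGroup.

Lemma coprime_pow_cross_bound (a b p q m : nat) :
  (0 < a)%N -> (0 < b)%N -> (0 < p)%N -> (0 < q)%N -> (0 < m)%N ->
  coprime p q -> (a * q ^ m = p ^ m * b)%N -> (p <= a)%N /\ (q <= b)%N.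
Proof.
move=> a0 b0 p0 q0 m0 cpq E.
have cm : coprime (p ^ m) (q ^ m) by rewrite coprimeXl // coprimeXr.
have cm' : coprime (q ^ m) (p ^ m) by rewrite coprime_sym.
have pa : (p ^ m %| a)%N by rewrite -(Gauss_dvdl _ cm) E dvdn_mulr.
have qb : (q ^ m %| b)%N by rewrite -(Gauss_dvdr _ cm') -E dvdn_mull.
have pow_ge n : (0 < n)%N -> (n <= n ^ m)%N by move=> n0; rewrite -{1}(expn1 n) leq_pexp2l.
by split; [apply: leq_trans (pow_ge _ p0) (dvdn_leq a0 pa) | apply: leq_trans (pow_ge _ q0) (dvdn_leq b0 qb)].
Qed.

Lemma coprime_pow_ratio_bound (R : realType) (a b p q m : nat) :
  (0 < a)%N -> (0 < b)%N -> (0 < p)%N -> (0 < q)%N -> (0 < m)%N -> coprime p q ->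
  (a%:R / b%:R : R) = (p%:R / q%:R) ^+ m -> (p + q <= a + b)%N.
Proof.
move=> a0 b0 p0 q0 m0 cpq; rewrite expr_div_n => /eqP.
have nz n : (0 < n)%N -> (n%:R : R) != 0 by rewrite pnatr_eq0 -lt0n.
rewrite eqr_div ?expf_neq0 ?nz // -!natrX -!natrM eqr_nat => /eqP E.
by have [pa qb] := coprime_pow_cross_bound a0 b0 p0 q0 m0 cpq E; apply: leq_add.
Qed.

(* The same for any nonzero integer power, using symmetry in (p, q). *)
Lemma coprime_zpow_ratio_bound (R : realType) (a b p q : nat) (z : int) :
  (0 < a)%N -> (0 < b)%N -> (0 < p)%N -> (0 < q)%N -> coprime p q -> z != 0 ->
  (a%:R / b%:R : R) = (p%:R / q%:R) ^ z -> (p + q <= a + b)%N.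
Proof.
move=> a0 b0 p0 q0 cpq; case: z => [[|n]|n] // _ E.
  exact: (coprime_pow_ratio_bound a0 b0 p0 q0 (ltn0Sn n) cpq E).
rewrite addnC; apply: (coprime_pow_ratio_bound a0 b0 q0 p0 (ltn0Sn n)).
  by rewrite coprime_sym.
by apply: (etrans E); rewrite -[in RHS]invf_div exprVn.
Qed.

Lemma cyclic_sum_bound (R : realType) (p q : nat) (ps : seq (nat * nat)) :
  (0 < p)%N -> (0 < q)%N -> coprime p q -> (0 < size ps)%N ->
  all (fun pq => (0 < pq.1)%N && (0 < pq.2)%N) ps ->
  gen_mulgroup [seq (pq.1)%:R / (pq.2)%:R | pq <- ps] = gen_mulgroup [:: (p%:R / q%:R : R)] ->
  (p + q <= \sum_(pq <- ps) (pq.1 + pq.2))%N.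
Proof.
move=> p0 q0 cpq sz allp E.
have term pq : pq \in ps -> (pq.1 + pq.2 <= \sum_(pq <- ps) (pq.1 + pq.2))%N.
  by move=> h; rewrite (big_rem _ h) /= leq_addr.
have pos pq : pq \in ps -> (0 < pq.1)%N && (0 < pq.2)%N by move=> h; exact: (allP allp pq h).
case: (eqVneq p q) => [epq | npq].
  (* p = q = 1, and every term is at least 2 *)
  move: cpq; rewrite -epq /coprime gcdnn => /eqP ->.
  case: ps sz term pos {allp E} => [|pq s] // _ term pos.
  apply: leq_trans (term _ (mem_head _ _)).
  by have /andP[h1 h2] := pos _ (mem_head _ _); apply: leq_add.
have pq1 : (p%:R / q%:R : R) != 1.
  by apply: contra npq => /eqP h; rewrite -(eqr_nat R) -[p%:R](@divfK _ q%:R) ?h ?mul1r ?pnatr_eq0 -?lt0n.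
(* some generator p_i/q_i is a nontrivial power of p/q *)
have : gen_mulgroup [seq (pq.1)%:R / (pq.2)%:R | pq <- ps] (p%:R / q%:R : R).
  by rewrite E; apply: gen_mulgroup_mem; rewrite mem_head.
move=> /gen_mulgroup_neq1 /(_ pq1); rewrite has_map => /hasP [pq hin hne].
have : gen_mulgroup [:: (p%:R / q%:R : R)] (pq.1%:R / pq.2%:R).
  by rewrite -E; apply: gen_mulgroup_mem; apply/mapP; exists pq.
move=> /gen_mulgroup_cyclic [z hz].
have /andP[a0 b0] := pos _ hin.
apply: leq_trans (term _ hin); apply: (coprime_zpow_ratio_bound a0 b0 p0 q0 cpq _ hz).
by apply: contra hne => /eqP z0; rewrite hz z0 expr0z.
Qed.

Section TopologicalGroup.
Variables (T : ptopologicalType) (mul : T -> T -> T) (inv : T -> T) (one : T).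
Hypothesis HG : is_tdlc_group mul inv one.

Lemma mulA x y z : mul x (mul y z) = mul (mul x y) z.
Proof. by case: HG => -[]. Qed.
Lemma mul1g x : mul one x = x. Proof. by case: HG => -[]. Qed.
Lemma mulg1 x : mul x one = x. Proof. by case: HG => -[]. Qed.
Lemma mulVg x : mul (inv x) x = one. Proof. by case: HG => -[]. Qed.
Lemma mulgV x : mul x (inv x) = one. Proof. by case: HG => -[]. Qed.
Lemma mulKg x y : mul (inv x) (mul x y) = y. Proof. by rewrite mulA mulVg mul1g. Qed.
Lemma mulKVg x y : mul x (mul (inv x) y) = y. Proof. by rewrite mulA mulgV mul1g. Qed.
Lemma mulgK x y : mul (mul y x) (inv x) = y. Proof. by rewrite -mulA mulgV mulg1. Qed.
Lemma mulgKV x y : mul (mul y (inv x)) x = y. Proof. by rewrite -mulA mulVg mulg1. Qed.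

Lemma continuous_mull c : continuous (mul c).
Proof.
move=> x; case: HG => _ hc _ _ _.
apply: (@continuous_comp _ _ _ (fun y => (c, y)) (fun p : T * T => mul p.1 p.2)); last exact: hc.
by apply: cvg_pair; [exact: cvg_cst | exact: cvg_id].
Qed.

Lemma continuous_mulr c : continuous (mul^~ c).
Proof.
move=> x; case: HG => _ hc _ _ _.
apply: (@continuous_comp _ _ _ (fun y => (y, c)) (fun p : T * T => mul p.1 p.2)); last exact: hc.
by apply: cvg_pair; [exact: cvg_id | exact: cvg_cst].
Qed.

Lemma image_mull c (A : set T) : [set mul c a | a in A] = mul (inv c) @^-1` A.
Proof.
apply/seteqP; split => x /=; first by case=> a Aa <-; rewrite mulKg.
by move=> Ax; exists (mul (inv c) x) => //; rewrite mulKVg.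
Qed.

Lemma image_mulr c (A : set T) : [set mul a c | a in A] = mul^~ (inv c) @^-1` A.
Proof.
apply/seteqP; split => x /=; first by case=> a Aa <-; rewrite mulgK.
by move=> Ax; exists (mul x (inv c)) => //; rewrite mulgKV.
Qed.

Lemma open_image_mull c (A : set T) : open A -> open [set mul c a | a in A].
Proof. by move=> oA; rewrite image_mull; apply: open_comp => // x _; apply: continuous_mull. Qed.

Lemma open_image_mulr c (A : set T) : open A -> open [set mul a c | a in A].
Proof. by move=> oA; rewrite image_mulr; apply: open_comp => // x _; apply: continuous_mulr. Qed.

Lemma compact_image_mull c (A : set T) : compact A -> compact [set mul c a | a in A].
Proof.
move=> cA; apply: continuous_compact => //.
by apply: continuous_subspaceT => x; apply: continuous_mull.
Qed.
End TopologicalGroup.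

Lemma open_measurable_borel (T : ptopologicalType) (A : set T) :
  open A -> measurable (A : set (borel T)).
Proof. by move=> oA; apply: sub_sigma_algebra. Qed.

Section CayleyAbels.
Unset Implicit Arguments.
Variables (T : ptopologicalType) (mul : T -> T -> T) (inv : T -> T) (one : T).
Hypothesis HG : is_tdlc_group mul inv one.
Variables (R : realType) (mu : {measure set (borel T) -> \bar R}).
Hypothesis Hmu : right_haar mul mu.
Variable Delta : T -> R.
Hypothesis HDelta : modular_function_of mul mu Delta.
Variables (V : Type) (adj : V -> V -> Prop) (act : T -> V -> V).
Hypothesis HCA : cayley_abels_graph mul one adj act.

Local Notation mulA := (mulA HG).
Local Notation mulVg := (mulVg HG). Local Notation mulgV := (mulgV HG).
Local Notation mulKg := (mulKg HG). Local Notation mulKVg := (mulKVg HG).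
Local Notation mulgKV := (mulgKV HG).

Definition Stab x := [set g | act g x = x].

Lemma act1 x : act one x = x. Proof. by case: HCA => _ _ _ [[]]. Qed.
Lemma actM g h x : act (mul g h) x = act g (act h x). Proof. by case: HCA => _ _ _ [[]]. Qed.
Lemma actK g x : act (inv g) (act g x) = x. Proof. by rewrite -actM mulVg act1. Qed.
Lemma actKV g x : act g (act (inv g) x) = x. Proof. by rewrite -actM mulgV act1. Qed.
Lemma adj_act g x y : adj x y <-> adj (act g x) (act g y). Proof. by case: HCA => _ _ _ [_]. Qed.
Lemma adj_sym x y : adj x y -> adj y x. Proof. by case: HCA => -[hs _] *; apply: hs. Qed.
Lemma act_transitive x y : exists g, act g x = y. Proof. by case: HCA => _ _ _ _ []. Qed.
Lemma reachable x y : clos_refl_trans_n1 V adj x y.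
Proof. by apply: clos_rt_rtn1; case: HCA => _ hc _ _ _; apply: hc. Qed.
Lemma open_Stab x : open (Stab x). Proof. by case: HCA => _ _ _ _ [_ /(_ x) []]. Qed.
Lemma compact_Stab x : compact (Stab x). Proof. by case: HCA => _ _ _ _ [_ /(_ x) []]. Qed.
Lemma Stab1 x : Stab x one. Proof. exact: act1. Qed.
Lemma StabV x u : Stab x u -> Stab x (inv u).
Proof. by rewrite /Stab /= => hu; rewrite -{1}hu actK. Qed.
Lemma StabM x u u' : Stab x u -> Stab x u' -> Stab x (mul u u').
Proof. by rewrite /Stab /= => hu hu'; rewrite actM hu' hu. Qed.

Lemma adj_inv v g : adj v (act g v) -> adj v (act (inv g) v).
Proof. by move=> /(adj_act (inv g)) /adj_sym; rewrite actK. Qed.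

Lemma mu_open_gt0 (A : set T) : open A -> A !=set0 -> (0 < mu A)%E.
Proof. by case: Hmu => _ _ H _ _; apply: H. Qed.
Lemma mu_compact_lty (A : set T) : compact A -> (mu A < +oo)%E.
Proof. by case: Hmu => _ H _ _ _; apply: H. Qed.
Lemma mu_mulr (A : set T) g : open A -> mu [set mul a g | a in A] = mu A.
Proof. by case: Hmu => H _ _ _ _ oA; apply: H; apply: open_measurable_borel. Qed.
Lemma mu_mull (A : set T) g : open A -> mu [set mul g a | a in A] = ((Delta g)%:E * mu A)%E.
Proof. by move=> oA; apply: HDelta; apply: open_measurable_borel. Qed.

(* Stabilisers are compact open, hence of finite positive measure. *)
Lemma mu_Stab x : exists2 m : R, mu (Stab x) = m%:E & 0 < m.
Proof.
have := mu_open_gt0 _ (open_Stab x) (ex_intro _ one (Stab1 x)).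
have := mu_compact_lty _ (compact_Stab x).
by case: (mu (Stab x)) => [r| |] //= _ r0; exists r.
Qed.

Lemma image_mull_Stab u x : Stab x u -> [set mul u a | a in Stab x] = Stab x.
Proof.
move=> hu; apply/seteqP; split => y /=; first by case=> a ha <-; rewrite /Stab /= actM ha hu.
move=> hy; exists (mul (inv u) y); last by rewrite mulKVg.
by apply: StabM => //; apply: StabV.
Qed.

Lemma Delta_Stab u x : Stab x u -> Delta u = 1.
Proof.
move=> hu; have [m hm m0] := mu_Stab x.
have := mu_mull _ u (open_Stab x); rewrite image_mull_Stab // hm -EFinM => E0.
have E := EFin_inj E0.
by apply: (mulIf (lt0r_neq0 m0)); rewrite mul1r -E.
Qed.

(* Two stabilisers meet in an open subset of a compact open set, containing one. *)
Lemma mu_Stab_meet x y : exists2 k : R, mu (Stab x `&` Stab y) = k%:E & 0 < k.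
Proof.
have [m hm m0] := mu_Stab x.
have oK : open (Stab x `&` Stab y) by apply: openI; apply: open_Stab.
have : (mu (Stab x `&` Stab y) <= mu (Stab x))%E.
  apply: le_measure; rewrite ?inE; last by move=> z [].
    exact: open_measurable_borel.
  exact: (open_measurable_borel (open_Stab x)).
have : (0 < mu (Stab x `&` Stab y))%E by apply: mu_open_gt0 => //; exists one; split; apply: Stab1.
by rewrite hm; case: (mu _) => [r| |] //= r0 _; exists r.
Qed.

Lemma Stab_meet_conj x g : Stab x `&` Stab (act (inv g) x) =
  [set mul (inv g) b | b in [set mul c g | c in Stab x `&` Stab (act g x)]].
Proof.
apply/seteqP; split => y /=.
  case=> hy1 hy2; exists (mul (mul (mul g y) (inv g)) g); last by rewrite mulgKV mulKg.
  exists (mul (mul g y) (inv g)) => //; split.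
    by rewrite /Stab /= !actM hy2 actKV.
  by rewrite /Stab /= !actM actK hy1.
case=> b [c [hc1 hc2] <-] <-; split.
  by rewrite /Stab /= !actM hc2 actK.
by rewrite /Stab /= !actM actKV hc1.
Qed.

Variable v : V.

(* Delta is positive: it rescales the positive finite measure of Stab v. *)
Lemma Delta_gt0 g : 0 < Delta g.
Proof.
have [m hm m0] := mu_Stab v.
have := mu_open_gt0 _ (open_image_mull HG g (open_Stab v))
  (ex_intro _ (mul g one) (ex_intro2 _ _ one (Stab1 v) erefl)).
rewrite mu_mull ?hm; last exact: open_Stab.
by rewrite -EFinM lte_fin pmulr_lgt0.
Qed.

Lemma DeltaM g h : Delta (mul g h) = Delta g * Delta h.
Proof.
have [m hm m0] := mu_Stab v.
have E : [set mul (mul g h) a | a in Stab v] = [set mul g b | b in [set mul h a | a in Stab v]].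
  apply/seteqP; split => x /=.
    by case=> a Aa <-; exists (mul h a) => //; [exists a | rewrite mulA].
  by case=> b [a Aa <-] <-; exists a => //; rewrite mulA.
have := mu_mull _ (mul g h) (open_Stab v).
rewrite E (mu_mull _ g (open_image_mull HG h (open_Stab v))) (mu_mull _ h (open_Stab v)).
rewrite hm muleA -!EFinM => E0.
by apply: (mulIf (lt0r_neq0 m0)); apply: EFin_inj.
Qed.

Lemma Delta_one : Delta one = 1.
Proof. exact: (Delta_Stab _ _ (Stab1 v)). Qed.

Lemma DeltaV g : Delta (inv g) = (Delta g)^-1.
Proof.
apply: (mulfI (lt0r_neq0 (Delta_gt0 g))).
by rewrite -DeltaM mulgV Delta_one mulfV // lt0r_neq0 // Delta_gt0.
Qed.

Lemma Delta_act_eq g h x : act g x = act h x -> Delta g = Delta h.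
Proof.
move=> E; have hu : Stab x (mul (inv g) h) by rewrite /Stab /= actM -E actK.
by rewrite -{1}(mulKVg g h) DeltaM (Delta_Stab _ _ hu) mulr1.
Qed.

Variables (d : nat) (e : 'I_d -> V).
Hypothesis e_inj : injective e.
Hypothesis e_adj : forall i, adj v (e i).
Hypothesis e_surj : forall w, adj v w -> exists i, e i = w.

Definition Ob (w : V) : {set 'I_d} := [set j | `[< exists u, Stab v u /\ act u w = e j >]].

Lemma ObP w j : reflect (exists u, Stab v u /\ act u w = e j) (j \in Ob w).
Proof. by rewrite inE; apply: asboolP. Qed.

Lemma fibre_coset w j : j \in Ob w -> exists2 u, Stab v u &
  [set u' | Stab v u' /\ act u' w = e j] = [set mul u a | a in Stab v `&` Stab w].
Proof.
move=> /ObP [u [hu hw]]; exists u => //.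
apply/seteqP; split => y /=.
  case=> hy hyw; exists (mul (inv u) y); last by rewrite mulKVg.
  split; first by apply: StabM => //; apply: StabV.
  by rewrite /Stab /= actM hyw -hw actK.
case=> a [ha haw] <-; split; first exact: StabM.
by rewrite actM haw hw.
Qed.

(* Orbit-stabiliser for measures: mu(Stab v) = |Ob w| * mu(Stab v :&: Stab w). *)
Lemma mu_Stab_orbit w k : adj v w -> mu (Stab v `&` Stab w) = k%:E ->
  mu (Stab v) = (k *+ #|Ob w|)%:E.
Proof.
move=> avw hk; pose F (j : 'I_d) := [set u | Stab v u /\ act u w = e j].
have oK : open (Stab v `&` Stab w) by apply: openI; apply: open_Stab.
have cover : Stab v = \big[setU/set0]_(j < d | j \in Ob w) F j.
  rewrite -bigcup_pred; apply/seteqP; split => y /=; last by case=> j _ [].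
  move=> hy; have avy : adj v (act y w) by have := proj1 (adj_act y v w) avw; rewrite hy.
  by have [j hj] := e_surj _ avy; exists j => //; apply/ObP; exists y.
rewrite {1}cover measure_bigsetU_ord_cond.
- rewrite -sumr_const -sumEFin; apply: eq_bigr => j /fibre_coset [u hu]; rewrite /F => ->.
  by have := mu_mull _ u oK; rewrite (Delta_Stab _ _ hu) mul1e hk; apply.
- move=> j /fibre_coset [u _]; rewrite /F => ->.
  by apply: open_measurable_borel; apply: (open_image_mull HG u oK).
- by move=> i j _ _ [y [[_ h1] [_ h2]]]; apply: e_inj; rewrite -h1 -h2.
Qed.

Lemma Delta_orbit_ratio g : adj v (act g v) ->
  Delta g * (#|Ob (act g v)|)%:R = (#|Ob (act (inv g) v)|)%:R.
Proof.
move=> h; set K := Stab v `&` Stab (act g v).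
have oK : open K by apply: openI; apply: open_Stab.
have [k hk k0] := mu_Stab_meet v (act g v).
have hK' : mu (Stab v `&` Stab (act (inv g) v)) = ((Delta g)^-1 * k)%:E.
  have := mu_mull _ (inv g) (open_image_mulr HG g oK); rewrite -Stab_meet_conj => ->.
  by have := mu_mulr K g oK; move=> ->; rewrite hk DeltaV EFinM.
have := mu_Stab_orbit _ _ (adj_inv _ _ h) hK'; rewrite (mu_Stab_orbit _ _ h hk) => E0.
have := EFin_inj E0; rewrite -(mulr_natr k) -(mulr_natr (_ * k)) => E.
apply: (mulfI (lt0r_neq0 k0)).
by rewrite mulrCA E mulrA mulrA mulfV ?mul1r // lt0r_neq0 // Delta_gt0.
Qed.

(* A graph of valency at most 1 would force G = Stab v or G = Stab v :|: g Stab v,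
   both compact. *)
Lemma valency_gt1 : ~ compact [set: T] -> (1 < d)%N.
Proof.
move=> nc; rewrite ltnNge; apply/negP => dle; apply: nc.
have [d0|d1] : d = 0%N \/ d = 1%N by move: dle; case: (d) => [|[|]] //; auto.
  have onlyv x : clos_refl_trans_n1 V adj v x -> x = v.
    elim => // y z ayz _ IH; rewrite IH in ayz.
    by have [[i hi] _] := e_surj _ ayz; move: hi; rewrite d0.
  have -> : [set: T] = Stab v.
    by apply/seteqP; split => h // _; exact: (onlyv _ (reachable v (act h v))).
  exact: compact_Stab.
have i0lt : (0 < d)%N by rewrite d1.
set w := e (Ordinal i0lt).
have nbw z : adj v z -> z = w.
  move=> /e_surj [[i hi] <-]; congr e; apply: val_inj => /=.
  by move: hi; rewrite d1; case: i.
have [g gv] := act_transitive v w.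
have twov x : clos_refl_trans_n1 V adj v x -> x = v \/ x = w.
  elim; first by left.
  move=> y z ayz _ [E|E]; rewrite E in ayz; first by right; apply: nbw.
  have gVv : act (inv g) v = w by apply: nbw; apply: adj_inv; rewrite gv; apply: e_adj.
  have gVz : act (inv g) z = w.
    by apply: nbw; have := proj1 (adj_act (inv g) _ _) ayz; rewrite -gv actK.
  by left; rewrite -(actKV g z) gVz -gVv actKV.
have -> : [set: T] = Stab v `|` [set mul g a | a in Stab v].
  apply/seteqP; split => h // _.
  case: (twov _ (reachable v (act h v))) => E; [by left | right].
  exists (mul (inv g) h); last by rewrite mulKVg.
  by rewrite /Stab /= actM E -gv actK.
apply: compactU; first exact: compact_Stab.
by apply: (compact_image_mull HG); exact: compact_Stab.
Qed.

Variables (gs : 'I_d -> T) (rv : 'I_d -> 'I_d).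
Hypothesis gsP : forall j, act (gs j) v = e j.
Hypothesis rvP : forall j, e (rv j) = act (inv (gs j)) v.

Definition Orb j := Ob (e j).

Lemma Orb_self j : j \in Orb j.
Proof. by apply/ObP; exists one; split; [apply: Stab1 | rewrite act1]. Qed.

Lemma Orb_eq {j k} : k \in Orb j -> Orb k = Orb j.
Proof.
move=> /ObP [u [hu huk]]; apply/setP => l; apply/ObP/ObP => -[u' [hu' hl]].
  by exists (mul u' u); split; [apply: StabM | rewrite actM huk].
exists (mul u' (inv u)); split; first by apply: StabM => //; apply: StabV.
by rewrite actM -huk actK.
Qed.

Lemma Orb_meet {j k l} : l \in Orb j -> l \in Orb k -> Orb j = Orb k.
Proof. by move=> /Orb_eq <- /Orb_eq <-. Qed.

Lemma Orb_rv {j k} : k \in Orb j -> rv k \in Orb (rv j).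
Proof.
move=> /ObP [u [hu huk]]; apply/ObP.
exists (mul (inv (gs k)) (mul u (gs j))); split.
  by rewrite /Stab /= !actM gsP huk -gsP actK.
by rewrite !rvP !actM actKV hu.
Qed.

Lemma Orb_rv_eq {j k} : Orb j = Orb k -> Orb (rv j) = Orb (rv k).
Proof. by move=> E; apply: Orb_eq; apply: Orb_rv; rewrite -E Orb_self. Qed.

Lemma Orb_rv_rv j : Orb (rv (rv j)) = Orb j.
Proof.
apply: Orb_eq; apply/ObP; exists (mul (inv (gs (rv j))) (inv (gs j))); split.
  by rewrite /Stab /= !actM -rvP -gsP actK.
by rewrite actM -gsP actK rvP.
Qed.

Lemma Delta_Orb {j k} : k \in Orb j -> Delta (gs k) = Delta (gs j).
Proof.
move=> /ObP [u [hu huk]].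
rewrite (Delta_act_eq (gs k) (mul u (gs j)) v); last by rewrite actM !gsP huk.
by rewrite DeltaM (Delta_Stab _ _ hu) mul1r.
Qed.

Lemma Delta_rv j : Delta (gs (rv j)) = (Delta (gs j))^-1.
Proof. by rewrite -DeltaV; apply: (Delta_act_eq _ _ v); rewrite gsP rvP. Qed.

Lemma Delta_Orb_ratio j : Delta (gs j) * (#|Orb j|)%:R = (#|Orb (rv j)|)%:R.
Proof.
have h : adj v (act (gs j) v) by rewrite gsP.
by have := Delta_orbit_ratio _ h; rewrite /Orb gsP -rvP.
Qed.

Lemma card_Orb_gt0 j : (0 < #|Orb j|)%N.
Proof. by apply/card_gt0P; exists j; apply: Orb_self. Qed.

(* Representatives of the pairs of distinct orbits {Orb j, Orb (rv j)}: j is the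
   least index of its orbit and lies below every index of the paired orbit. *)
Definition reps : {set 'I_d} :=
  [set j | [forall k in Orb j, (j <= k)%N] && [forall k in Orb (rv j), (j < k)%N]].

Lemma reps_min {j k} : j \in reps -> k \in Orb j -> (j <= k)%N.
Proof. by rewrite inE => /andP[/forall_inP h _]; apply: h. Qed.

Lemma reps_lt {j k} : j \in reps -> k \in Orb (rv j) -> (j < k)%N.
Proof. by rewrite inE => /andP[_ /forall_inP h]; apply: h. Qed.

Lemma reps_inj {j j'} : j \in reps -> j' \in reps -> Orb j = Orb j' -> j = j'.
Proof.
move=> hj hj' E; apply: val_inj; apply/eqP; rewrite eqn_leq.
by rewrite (reps_min hj) ?E ?Orb_self // (reps_min hj') // -E Orb_self.
Qed.

Lemma reps_cross {j j'} : j \in reps -> j' \in reps -> Orb j <> Orb (rv j').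
Proof.
move=> hj hj' E.
have lt1 : (j' < j)%N by apply: (reps_lt hj'); rewrite -E Orb_self.
have lt2 : (j < j')%N by apply: (reps_lt hj); rewrite (Orb_rv_eq E) Orb_rv_rv Orb_self.
by have := ltn_trans lt1 lt2; rewrite ltnn.
Qed.

Definition Pair j := Orb j :|: Orb (rv j).

Lemma card_Pair j : j \in reps -> #|Pair j| = (#|Orb (rv j)| + #|Orb j|)%N.
Proof.
move=> hj; rewrite /Pair cardsU addnC.
suff -> : #|Orb j :&: Orb (rv j)| = 0%N by rewrite subn0.
apply: eq_card0 => l; rewrite finset.in_setI [RHS]inE; apply/negbTE/negP => /andP[h1 h2].
exact: (reps_cross hj hj (Orb_meet h1 h2)).
Qed.

Lemma Pair_uniq {j j' k} : j \in reps -> j' \in reps -> k \in Pair j -> k \in Pair j' -> j = j'.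
Proof.
move=> hj hj'; rewrite /Pair !finset.in_setU => /orP[h1|h1] /orP[h2|h2].
- exact: (reps_inj hj hj' (Orb_meet h1 h2)).
- by case: (reps_cross hj hj' (Orb_meet h1 h2)).
- by case: (reps_cross hj' hj (Orb_meet h2 h1)).
- apply: (reps_inj hj hj'); rewrite -(Orb_rv_rv j) -(Orb_rv_rv j').
  exact: (Orb_rv_eq (Orb_meet h1 h2)).
Qed.

Lemma sum_card_Pair_le : (\sum_(j in reps) (#|Orb (rv j)| + #|Orb j|) <= d)%N.
Proof.
rewrite -(eq_bigr _ card_Pair).
have cardE (A : {set 'I_d}) : #|A| = \sum_(k : 'I_d) (k \in A : nat).
  by rewrite -sum1_card big_mkcond /=; apply: eq_bigr => k _; case: (k \in A).
rewrite (eq_bigr _ (fun j _ => cardE (Pair j))) exchange_big /=.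
rewrite -[X in (_ <= X)%N]card_ord -sum1_card; apply: leq_sum => k _.
case: (pickP [pred j | (j \in reps) && (k \in Pair j)]) => [j0 /andP[hj0 hk0] | none].
  rewrite (bigD1 j0) //= hk0 big1 // => j /andP[hj hne]; case hk: (k \in Pair j) => //.
  by move: hne; rewrite (Pair_uniq hj hj0 hk hk0) eqxx.
rewrite big1 // => j hj; case hk: (k \in Pair j) => //.
by have := none j; rewrite /= hj hk.
Qed.

Lemma min_Pair_reps {m j} : Orb j != Orb (rv j) -> m \in Orb j ->
  (forall k, k \in Pair j -> (m <= k)%N) -> m \in reps.
Proof.
move=> ne mj mmin; rewrite inE; apply/andP; split; apply/forall_inP => k hk.
  by apply: mmin; rewrite /Pair finset.in_setU -(Orb_eq mj) hk.
have hk' : k \in Orb (rv j) by rewrite -(Orb_rv_eq (Orb_eq mj)).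
rewrite ltn_neqAle mmin ?andbT; last by rewrite /Pair finset.in_setU hk' orbT.
apply: contra ne => /eqP mk; have {}mk : m = k by apply: val_inj.
by apply/eqP; apply: (Orb_meet mj); rewrite mk.
Qed.

(* The ratios Delta(g_j) = |Orb (rv j)| / |Orb j| for the representatives. *)
Definition ratios := [seq Delta (gs j) | j <- enum reps].

Lemma ratios_neq0 i : (i < size ratios)%N -> ratios`_i != 0.
Proof.
by move=> /(mem_nth 0) /mapP [j _ ->]; apply: lt0r_neq0; apply: Delta_gt0.
Qed.

Lemma gen_ratios_reps j : j \in reps -> gen_mulgroup ratios (Delta (gs j)).
Proof. by move=> hj; apply: gen_mulgroup_mem; apply/mapP; exists j; rewrite ?mem_enum. Qed.

(* Every Delta(g_j) is 1 (self-paired orbit) or a representative ratio or its inverse. *)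
Lemma gen_ratios_gs j : gen_mulgroup ratios (Delta (gs j)).
Proof.
case: (eqVneq (Orb j) (Orb (rv j))) => [eqO|neO].
  have := Delta_Orb_ratio j; rewrite -eqO -{2}[(#|Orb j|)%:R]mul1r => /mulIf.
  by rewrite pnatr_eq0 -lt0n card_Orb_gt0 => /(_ isT) ->; apply: gen_mulgroup1.
have jP : j \in Pair j by rewrite /Pair finset.in_setU Orb_self.
have [m mP mmin] : exists2 m, m \in Pair j & forall k, k \in Pair j -> (m <= k)%N.
  by case: (arg_minnP (fun k : 'I_d => val k) jP) => m; exists m.
move: (mP); rewrite /Pair finset.in_setU => /orP[mO|mO].
  by rewrite -(Delta_Orb mO); apply: gen_ratios_reps; apply: (min_Pair_reps neO mO mmin).
have mS : m \in reps.
  apply: (min_Pair_reps (j := rv j)) mO _; first by rewrite Orb_rv_rv eq_sym.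
  move=> k; rewrite /Pair finset.in_setU Orb_rv_rv orbC => hk.
  by apply: mmin; rewrite /Pair finset.in_setU.
rewrite -[Delta (gs j)]invrK -Delta_rv -(Delta_Orb mO).
by apply: gen_mulgroupV; apply: gen_ratios_reps.
Qed.

(* By connectedness, every value of Delta lies in the group generated by the ratios. *)
Lemma gen_ratios_Delta h : gen_mulgroup ratios (Delta h).
Proof.
suff H x : clos_refl_trans_n1 V adj v x -> forall h, act h v = x -> gen_mulgroup ratios (Delta h).
  exact: (H _ (reachable v (act h v)) h erefl).
elim => [| y z ayz _ IH] {}h hx; first by rewrite (Delta_Stab h v hx); apply: gen_mulgroup1.
have [g hg] := act_transitive v y.
have az : adj v (act (inv g) z).
  by have := proj1 (adj_act (inv g) y z) ayz; rewrite -hg actK.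
have [j hj] := e_surj _ az.
rewrite (Delta_act_eq h (mul g (gs j)) v); last by rewrite actM gsP hj actKV hx.
by rewrite DeltaM; apply: gen_mulgroupM; [exact: ratios_neq0 | exact: IH | exact: gen_ratios_gs].
Qed.

Lemma gen_ratios_range : gen_mulgroup ratios = range Delta.
Proof.
apply/seteqP; split; last by move=> x [h _ <-]; exact: gen_ratios_Delta.
apply: gen_mulgroup_min.
- by exists one => //; exact: Delta_one.
- by move=> x y [g _ <-] [h _ <-]; exists (mul g h) => //; rewrite DeltaM.
- by move=> x [g _ <-]; exists (inv g) => //; rewrite DeltaV.
- by move=> i /(mem_nth 0) /mapP [j _ ->]; exists (gs j).
Qed.

(* The orbit pairs of the representatives give an element of A below d; when
   there are no representatives, Delta is trivial and 1/1 is used instead. *)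
Lemma sums_set_le_valency : (1 < d)%N -> exists2 a, sums_set (range Delta) a & (a <= d)%N.
Proof.
move=> d2; case Es: (enum reps) => [|j0 s'].
  have r1 : range Delta = [set 1].
    apply/seteqP; split => x; last by move=> ->; exists one => //; exact: Delta_one.
    by move=> [h _ <-]; have := gen_ratios_Delta h; rewrite /ratios Es /= => -[e0 [_ ->]]; rewrite big_ord0.
  exists 2%N => //; exists [:: (1%N, 1%N)]; split; [done|done| |by rewrite big_seq1].
  rewrite r1 /= divr1; apply/seteqP; split => x; last by move=> ->; apply: gen_mulgroup1.
  by move=> /gen_mulgroup_cyclic [z ->]; rewrite /set1 /= mulr1n exp1rz.
pose ps := [seq (#|Orb (rv j)|, #|Orb j|) | j <- enum reps].
exists (\sum_(pq <- ps) (pq.1 + pq.2))%N; last by rewrite big_map big_enum /=; apply: sum_card_Pair_le.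
exists ps; split => //; first by rewrite size_map Es.
  by apply/allP => pq /mapP [j _ ->] /=; rewrite !card_Orb_gt0.
rewrite -gen_ratios_range /ratios -map_comp; congr gen_mulgroup; apply: eq_map => j /=.
by rewrite -Delta_Orb_ratio mulfK // pnatr_eq0 -lt0n card_Orb_gt0.
Qed.
End CayleyAbels.

Lemma card_eq_enum (U : Type) (A : set U) (d : nat) : card_eq A `I_d ->
  exists e : 'I_d -> U, [/\ injective e, forall i, A (e i) & forall w, A w -> exists i, e i = w].
Proof.
move=> /card_set_bijP [f [fA finj fsurj]].
have preim (i : 'I_d) : exists w, A w /\ f w = val i.
  by have [w hw fw] := fsurj (val i) (ltn_ord i); exists w.
have [e eP] := choice preim.
exists e; split; first by move=> i j E; apply: val_inj; rewrite -(eP i).2 -(eP j).2 E.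
  by move=> i; exact: (eP i).1.
move=> w hw; exists (Ordinal (fA w hw)); apply: finj; rewrite ?inE //=.
  exact: (eP _).1.
by rewrite (eP (Ordinal (fA w hw))).2.
Qed.

Lemma sums_set_below_valency (T : ptopologicalType) (mul : T -> T -> T) (inv : T -> T)
  (one : T) (HG : is_tdlc_group mul inv one) (Hnc : ~ compact [set: T])
  (R : realType) (mu : {measure set (borel T) -> \bar R}) (Hmu : right_haar mul mu)
  (Delta : T -> R) (HDelta : modular_function_of mul mu Delta)
  (V : Type) (adj : V -> V -> Prop) (act : T -> V -> V)
  (HCA : cayley_abels_graph mul one adj act) (v : V) (d : nat) :
  card_eq [set w | adj v w] `I_d -> exists2 a, sums_set (range Delta) a & (a <= d)%N.
Proof.
move=> /card_eq_enum [e [e_inj e_adj e_surj]].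
have [gs gsP] := choice (fun j : 'I_d => @act_transitive _ _ _ _ _ _ HCA v (e j)).
have inv_adj j : adj v (act (inv (gs j)) v).
  by apply: (@adj_inv _ _ _ _ HG _ _ _ HCA); rewrite gsP; apply: e_adj.
have [rv rvP] := choice (fun j => e_surj _ (inv_adj j)).
apply: (@sums_set_le_valency _ _ _ _ HG _ _ Hmu _ HDelta _ _ _ HCA _ _ _
  e_inj e_adj e_surj _ _ gsP rvP).
exact: (@valency_gt1 _ _ _ _ HG _ _ _ HCA _ _ _ e_adj e_surj Hnc).
Qed.

Theorem theorem4p4 (T : ptopologicalType) (mul : T -> T -> T) (inv : T -> T) (one : T)
  (HG : is_tdlc_group mul inv one)
  (Hcg : compactly_generated mul inv one)
  (Hnc : ~ compact [set: T])
  (R : realType) (mu : {measure set (borel T) -> \bar R})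
  (Hmu : right_haar mul mu) (Hmu0 : mu [set: T] <> 0%E)
  (Delta : T -> R) (HDelta : modular_function_of mul mu Delta) :
  (forall (V : Type) (adj : V -> V -> Prop) (act : T -> V -> V),
     cayley_abels_graph mul one adj act ->
     forall (v : V) (d : nat), card_eq [set w | adj v w] `I_d ->
     exists2 a, sums_set (range Delta) a & (a <= d)%N)
  /\
  (forall p q : nat, (0 < p)%N -> (0 < q)%N -> coprime p q ->
     range Delta = gen_mulgroup [:: p%:R / q%:R] ->
     forall (V : Type) (adj : V -> V -> Prop) (act : T -> V -> V),
       cayley_abels_graph mul one adj act ->
       forall (v : V) (d : nat), card_eq [set w | adj v w] `I_d ->
       (p + q <= d)%N).
Proof.
have below V adj act HCA v d := @sums_set_below_valency T mul inv one HG Hnc R mu Hmu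
  Delta HDelta V adj act HCA v d.
split; first exact: below.
move=> p q p0 q0 cpq HDq V adj act HCA v d Hcard.
have [_ [ps [sz allp gens ->]] ale] := below V adj act HCA v d Hcard.
apply: leq_trans ale; apply: (cyclic_sum_bound (R := R)) => //.
by rewrite gens HDq.
Qed.
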